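(* Fix integers $k \ge 3$ and $i \in \{2,\dots,k-1\}$, and let $T = \{1,\dots,k\}\setminus\{i\} \subset \mathbb{Z}$. There is a function $f : \mathbb{Z} \to \{0,\dots,k-2\}$ such that for each $x \in \mathbb{Z}$, $\sum_{y \in T} f(x-y) \equiv 1 \pmod{k-1}$. *)

From Stdlib Require Import ZArith List.
Open Scope Z_scope.

Definition T_set (k i : Z) : list Z :=
  List.filter (fun y => negb (Z.eqb y i)) (List.map Z.of_nat (List.seq 1 (Z.to_nat k))).

Definition sum_over_T (k i : Z) (f : Z -> Z) (x : Z) : Z :=
  List.fold_right (fun y acc => f (x - y) + acc) 0 (T_set k i).

(** Since [1] and [k] both lie in [T] (this is all that is used about [i]),
    the congruence at [x] determines [f (x - 1)] from the values of [f] at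
    [x - 2, ..., x - k], and likewise [f (x - k)] from those at
    [x - 1, ..., x - k + 1].  Putting [f = 0] on a window of length [k - 1],
    one can therefore solve forwards and backwards, always choosing the
    representative in [{0, ..., k - 2}]; the backward recursion is the forward
    one for the reflected set [k + 1 - T]. *)

From Stdlib Require Import ZArith List Lia FinFun.
Open Scope Z_scope.

Definition sumZ (g : Z -> Z) (l : list Z) : Z :=
  fold_right (fun y acc => g y + acc) 0 l.

Lemma sumZ_ext (g h : Z -> Z) (l : list Z) :
  (forall y, In y l -> g y = h y) -> sumZ g l = sumZ h l.
Proof.
  induction l as [|a l IH]; intros Hgh; simpl; [reflexivity|].
  rewrite Hgh, IH; auto with datatypes.
Qed.

Lemma sumZ_map (g h : Z -> Z) (l : list Z) :
  sumZ g (map h l) = sumZ (fun y => g (h y)) l.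
Proof. induction l as [|a l IH]; simpl; congruence. Qed.

Lemma sumZ_extract (g : Z -> Z) (a : Z) (l : list Z) :
  NoDup l -> In a l ->
  sumZ g l = g a + sumZ (fun y => if y =? a then 0 else g y) l.
Proof.
  induction l as [|b l IH]; intros Hnd Ha; [destruct Ha|].
  inversion Hnd as [|? ? Hb Hl]; subst; simpl.
  destruct (Z.eqb_spec b a) as [-> | Hba].
  - rewrite (sumZ_ext g (fun y => if y =? a then 0 else g y) l); [lia|].
    intros y Hy; destruct (Z.eqb_spec y a); congruence.
  - destruct Ha as [-> | Ha]; [congruence|].
    rewrite IH by assumption; lia.
Qed.

Lemma In_T_set (k i y : Z) : In y (T_set k i) <-> 1 <= y <= k /\ y <> i.
Proof.
  unfold T_set; rewrite filter_In, in_map_iff.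
  split.
  - intros [[n [<- Hn]] Hi]; apply in_seq in Hn.
    destruct (Z.eqb_spec (Z.of_nat n) i); simpl in Hi; [discriminate | lia].
  - intros [Hy Hi]; split.
    + exists (Z.to_nat y); split; [lia|]; apply in_seq; lia.
    + destruct (Z.eqb_spec y i); [contradiction | reflexivity].
Qed.

Lemma T_set_NoDup (k i : Z) : NoDup (T_set k i).
Proof.
  apply NoDup_filter, Injective_map_NoDup; [exact Nat2Z.inj | apply seq_NoDup].
Qed.

Section ForwardSolution.

Variables (T : list Z) (m : Z).
Hypotheses (m_pos : 0 < m) (T_NoDup : NoDup T) (T_has_1 : In 1 T)
  (T_pos : forall y, In y T -> 1 <= y).

(* [fwd_fuel n x] is the forward solution at [x] as soon as [n > x + 1]. *)
Fixpoint fwd_fuel (fuel : nat) (x : Z) : Z :=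
  match fuel with
  | O => 0
  | S fuel =>
      if x <? 0 then 0
      else (1 - sumZ (fun y => if y =? 1 then 0 else fwd_fuel fuel (x + 1 - y)) T) mod m
  end.

Definition fwd (x : Z) : Z := fwd_fuel (S (Z.to_nat (x + 1))) x.

Lemma fwd_fuel_stable (fuel fuel' : nat) (x : Z) :
  (Z.to_nat (x + 1) < fuel)%nat -> (fuel <= fuel')%nat ->
  fwd_fuel fuel' x = fwd_fuel fuel x.
Proof.
  revert fuel' x; induction fuel as [|fuel IH]; intros fuel' x Hx Hle; [lia|].
  destruct fuel' as [|fuel']; [lia|]; simpl.
  destruct (Z.ltb_spec x 0); [reflexivity|].
  erewrite sumZ_ext; [reflexivity|]; intros y Hy; cbv beta.
  pose proof (T_pos y Hy).
  destruct (y =? 1) eqn:Hy1; [reflexivity|]; apply Z.eqb_neq in Hy1.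
  apply IH; lia.
Qed.

Lemma fwd_neg (x : Z) : x < 0 -> fwd x = 0.
Proof. intros Hx; unfold fwd; simpl; destruct (Z.ltb_spec x 0); lia. Qed.

Lemma fwd_range (x : Z) : 0 <= fwd x < m.
Proof.
  unfold fwd; simpl; destruct (x <? 0); [lia|]; apply Z.mod_pos_bound, m_pos.
Qed.

Lemma fwd_unfold (x : Z) : 0 <= x ->
  fwd x = (1 - sumZ (fun y => if y =? 1 then 0 else fwd (x + 1 - y)) T) mod m.
Proof.
  intros Hx; unfold fwd at 1; simpl; destruct (Z.ltb_spec x 0); [lia|].
  erewrite sumZ_ext; [reflexivity|]; intros y Hy; cbv beta.
  pose proof (T_pos y Hy).
  destruct (y =? 1) eqn:Hy1; [reflexivity|]; apply Z.eqb_neq in Hy1.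
  unfold fwd; apply fwd_fuel_stable; lia.
Qed.

Lemma fwd_solves (x : Z) : 1 <= x -> (m | sumZ (fun y => fwd (x - y)) T - 1).
Proof.
  intros Hx.
  rewrite (sumZ_extract _ 1) by assumption.
  set (R := sumZ _ T).
  assert (Hstep : fwd (x - 1) = (1 - R) mod m).
  { rewrite fwd_unfold by lia; erewrite sumZ_ext; [reflexivity|]; intros y _; cbv beta.
    destruct (y =? 1); [reflexivity|]; f_equal; ring. }
  rewrite Hstep, Z.mod_eq by lia.
  exists (- ((1 - R) / m)); ring.
Qed.

End ForwardSolution.

Lemma two_sided_solution (T : list Z) (m k : Z) :
  0 < m -> NoDup T -> In 1 T -> In k T -> (forall y, In y T -> 1 <= y <= k) ->
  exists f : Z -> Z,
    (forall x, 0 <= f x < m) /\ (forall x, (m | sumZ (fun y => f (x - y)) T - 1)).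
Proof.
  intros Hm Hnd H1 Hk Hbd.
  set (mirror := fun y => k + 1 - y).
  set (T' := map mirror T).
  assert (Hnd' : NoDup T').
  { apply Injective_map_NoDup; [intros a b; unfold mirror; lia | exact Hnd]. }
  assert (H1' : In 1 T').
  { apply in_map_iff; exists k; split; [unfold mirror; lia | exact Hk]. }
  assert (Hpos' : forall y, In y T' -> 1 <= y).
  { intros y Hy; apply in_map_iff in Hy as [z [<- Hz]].
    specialize (Hbd z Hz); unfold mirror; lia. }
  assert (Hpos : forall y, In y T -> 1 <= y) by (intros y Hy; apply Hbd, Hy).
  set (g := fwd T m); set (g' := fwd T' m).
  exists (fun x => if x <? 0 then g' (- k - x) else g x); split.
  - intros x; destruct (x <? 0); apply fwd_range; assumption.
  - intros x; destruct (Z.leb_spec 1 x) as [Hx | Hx].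
    + (* the backward part only meets the window where both halves vanish *)
      rewrite (sumZ_ext _ (fun y => g (x - y))).
      { apply fwd_solves; assumption. }
      intros y Hy; specialize (Hbd y Hy).
      destruct (Z.ltb_spec (x - y) 0); [|reflexivity].
      unfold g, g'; rewrite !fwd_neg; lia.
    + rewrite (sumZ_ext _ (fun y => g' (1 - x - mirror y))).
      { rewrite <- (sumZ_map (fun z => g' (1 - x - z))); apply fwd_solves; assumption || lia. }
      intros y Hy; specialize (Hbd y Hy).
      destruct (Z.ltb_spec (x - y) 0); [|lia].
      f_equal; unfold mirror; ring.
Qed.

Theorem proposition8 (k i : Z) (hk : 3 <= k) (hi1 : 2 <= i) (hi2 : i <= k - 1) :
  exists f : Z -> Z,
    (forall x : Z, 0 <= f x <= k - 2) /\
    (forall x : Z, (k - 1 | sum_over_T k i f x - 1)%Z).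
Proof.
  destruct (two_sided_solution (T_set k i) (k - 1) k) as [f [Hrange Hsol]].
  - lia.
  - apply T_set_NoDup.
  - apply In_T_set; lia.
  - apply In_T_set; lia.
  - intros y Hy; apply In_T_set in Hy; lia.
  - exists f; split.
    + intros x; specialize (Hrange x); lia.
    + exact Hsol.
Qed.
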